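(* Let $N\ge 0$, $k\ge1$ be integers and $f:\{0,\dots,N\}^k\to\{\mathbf{true},\mathbf{false}\}$ a feasibility function, and run $\textsc{ParetoEnumerate}(N,k,f)$ (with arbitrary choices of the picked element in each iteration). Once some evaluation of $f$ during the run has returned $\mathbf{true}$ at a point $\vec x$, the algorithm never afterwards evaluates $f$ at any point $\vec y$ with $\vec x\le_k\vec y$.
   Context: For $\vec x,\vec x'\in\{0,\dots,N\}^k$, $\vec x\le_k\vec x'$ iff $x_i\le x'_i$ for all $i$; $\vec x$ is smaller than $\vec x'$ (and $\vec x'$ greater than $\vec x$) if $\vec x\le_k\vec x'$ and $\vec x\neq\vec x'$. A feasibility function is a monotone $f:\{0,\dots,N\}^k\to\{\mathbf{true},\mathbf{false}\}$: if $f(\vec x)=\mathbf{true}$ then $f(\vec x')=\mathbf{true}$ for all $\vec x'$ greater than $\vec x$. Procedure $\textsc{SearchParetoPoint}(\vec x,k,f)$: for $i=1,\dots,k$: set $\mathit{max}:=x_i+1$, $\mathit{min}:=0$; while $\mathit{max}-\mathit{min}>1$: $\mathit{mid}:=\mathit{min}+\lfloor(\mathit{max}-\mathit{min}-1)/2\rfloor$, $x_i:=\mathit{mid}$, and if $f(\vec x)=\mathbf{true}$ then $\mathit{max}:=\mathit{mid}+1$ else $\mathit{min}:=\mathit{mid}+1$; then $x_i:=\mathit{min}$. Return $\vec x$. Procedure $\textsc{ParetoEnumerate}(N,k,f)$: initialize $S:=\{(N,\dots,N)\}$ and $P:=\emptyset$. Main loop: while $S\neq\emptyset$: pick (without removing)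 some $\vec x\in S$; if $f(\vec x)=\mathbf{true}$, then set $\vec x:=\textsc{SearchParetoPoint}(\vec x,k,f)$, set $P:=P\cup\{\vec x\}$, set $S':=\emptyset$, and for each $\vec y\in S$: if not $\vec x\le_k\vec y$, add $\vec y$ to $S'$; otherwise, for each $i\in\{1,\dots,k\}$ with $x_i>0$, add $(y_1,\dots,y_{i-1},x_i-1,y_{i+1},\dots,y_k)$ to $S'$; then set $S$ to the set of elements of $S'$ that are not smaller than any other element of $S'$. Otherwise (if $f(\vec x)=\mathbf{false}$), set $S:=S\setminus\{\vec x\}$. When the loop ends, return $P$. The evaluations of $f$ made during the run are exactly the test $f(\vec x)$ on the picked element in each main-loop iteration and the tests inside $\textsc{SearchParetoPoint}$. *)

From mathcomp Require Import all_boot.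
Set Implicit Arguments. Unset Strict Implicit. Unset Printing Implicit Defensive.

Section Pareto.
Variables (N k : nat).

Definition point := {ffun 'I_k -> 'I_N.+1}.

Definition le_k (x y : point) : bool := [forall i, x i <= y i].
Definition smaller (x y : point) : bool := le_k x y && (x != y).

Definition feasibility (f : point -> bool) : Prop :=
  forall x y, smaller x y -> f x -> f y.

(* x with coordinate i replaced by v (v <= N in all uses) *)
Definition upd (x : point) (i : 'I_k) (v : nat) : point :=
  [ffun j => if j == i then inord v else x j].

(* The while loop of SearchParetoPoint for coordinate i: returns final min and
   the list of evaluations (point, result) in order.  The fuel equals the
   initial value of max - min, which strictly decreases in each iteration,
   so the fuel never runs out before the loop condition fails. *)
Fixpoint bsearch (f : point -> bool) (x : point) (i : 'I_k)
    (fuel mn mx : nat) : nat * seq (point * bool) :=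
  match fuel with
  | 0 => (mn, [::])
  | fuel'.+1 =>
    if 1 < mx - mn then
      let mid := mn + (mx - mn - 1)./2 in
      let xm := upd x i mid in
      let b := f xm in
      let res := if b then bsearch f x i fuel' mn mid.+1
                 else bsearch f x i fuel' mid.+1 mx in
      (res.1, (xm, b) :: res.2)
    else (mn, [::])
  end.

Definition search_coord (f : point -> bool) (st : point * seq (point * bool))
    (i : 'I_k) : point * seq (point * bool) :=
  let x := st.1 in
  let res := bsearch f x i (x i).+1 0 (x i).+1 in
  (upd x i res.1, st.2 ++ res.2).

Definition search_pareto (f : point -> bool) (x : point)
    : point * seq (point * bool) :=
  foldl (search_coord f) (x, [::]) (enum 'I_k).

Definition S'_of (S : {set point}) (x : point) : {set point} :=
  [set z | [exists y in S,
     (~~ le_k x y && (z == y)) ||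
     (le_k x y && [exists i, (0 < x i) && (z == upd y i (x i).-1)])]].

Definition maximal_part (S' : {set point}) : {set point} :=
  [set y in S' | [forall z in S', ~~ smaller y z]].

(* Reachable configurations (S, P, trace of all evaluations of f so far, in
   order) of ParetoEnumerate(N,k,f), for arbitrary choices of picked element. *)
Inductive reach (f : point -> bool) :
    {set point} -> {set point} -> seq (point * bool) -> Prop :=
  | reach_init : reach f [set [ffun => ord_max]] set0 [::]
  | reach_true S P tr x :
      reach f S P tr -> x \in S -> f x = true ->
      reach f (maximal_part (S'_of S (search_pareto f x).1))
              ((search_pareto f x).1 |: P)
              (tr ++ (x, true) :: (search_pareto f x).2)
  | reach_false S P tr x :
      reach f S P tr -> x \in S -> f x = false ->
      reach f (S :\ x) P (rcons tr (x, false)).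

End Pareto.

From mathcomp Require Import all_boot zify.
Set Implicit Arguments. Unset Strict Implicit. Unset Printing Implicit Defensive.

(* Inside SearchParetoPoint the current point only decreases: a positive
   test at a point is followed by the current point dropping below it, and
   every later test is strictly below the current point in the coordinate
   being searched.  Across iterations of the main loop, no element of S lies
   above a positive query: the new elements of S are either old elements not
   above the new Pareto point p, or old elements lowered strictly below p in
   one coordinate, while p itself lies below every positive query of its
   search. *)

Section Pareto.
Variables (N k : nat).
Local Notation point := (point N k).
Local Notation le_k := (@le_k N k).

Lemma le_k_refl (x : point) : le_k x x.
Proof. by apply/forallP. Qed.

Lemma le_k_trans (x y z : point) : le_k x y -> le_k y z -> le_k x z.
Proof.
move=> /forallP le_xy /forallP le_yz; apply/forallP => i.
exact: leq_trans (le_xy i) (le_yz i).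
Qed.

Lemma upd_nat (x : point) i v j : v <= N ->
  (upd x i v j : nat) = if j == i then v else x j.
Proof. by move=> le_vN; rewrite ffunE; case: eqP => // _; rewrite inordK. Qed.

Lemma coord_leN (x : point) i : x i <= N.
Proof. by rewrite -ltnS. Qed.

Lemma le_k_updl (x : point) i v : v <= x i -> le_k (upd x i v) x.
Proof.
move=> le_v; apply/forallP => j.
rewrite upd_nat; last exact: leq_trans le_v (coord_leN x i).
by case: eqP => // ->.
Qed.

Lemma le_k_upd2 (x : point) i v w : v <= w -> w <= N ->
  le_k (upd x i v) (upd x i w).
Proof.
move=> le_vw le_wN; apply/forallP => j.
by rewrite !upd_nat ?(leq_trans le_vw) //; case: eqP.
Qed.

Lemma not_le_k_upd (x : point) i m : m < x i -> ~~ le_k x (upd x i m).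
Proof.
move=> lt_m; apply/negP => /forallP /(_ i).
have le_mN : m <= N by have := coord_leN x i; lia.
by rewrite upd_nat // eqxx leqNgt lt_m.
Qed.

Definition cone_avoided (a b : point * bool) : bool := a.2 ==> ~~ le_k a.1 b.1.

Variable f : point -> bool.

Lemma bsearch_spec (x : point) i fuel mn mx : mn < mx -> mx <= (x i).+1 ->
  let res := bsearch f x i fuel mn mx in
  [/\ mn <= res.1 < mx, pairwise cone_avoided res.2 &
      forall e, e \in res.2 -> exists m,
        [/\ e.1 = upd x i m, m < mx.-1 & e.2 -> res.1 <= m]].
Proof.
elim: fuel mn mx => [|fuel IH] mn mx lt_mn le_mx /=; first by rewrite leqnn.
case: ifP => [gt1|]; last by rewrite leqnn.
set mid := mn + (mx - mn - 1)./2.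
have le_mid : mn <= mid by rewrite leq_addr.
have lt_mid : mid < mx.-1.
  have : (mx - mn - 1)./2 < mx - mn - 1 by rewrite ltn_half_double -addnn; lia.
  rewrite /mid; lia.
have mid_leN : mid <= N by have := coord_leN x i; lia.
case fmid: (f (upd x i mid)).
- have [||/andP[res_ge res_lt] res_pw res_ev] := IH mn mid.+1; [lia | lia |].
  split=> /=; first (apply/andP; split; lia).
  + rewrite res_pw andbT; apply/allP => e /res_ev [m [e_m lt_m _]].
    rewrite /cone_avoided e_m /=; apply/negP => /forallP /(_ i).
    by rewrite !upd_nat ?eqxx //=; lia.
  + move=> e; rewrite inE => /orP [/eqP -> | /res_ev [m [e_m lt_m pos_m]]].
      by exists mid; split => //= _; lia.
    by exists m; split => //; lia.
- have [||/andP[res_ge res_lt] res_pw res_ev] := IH mid.+1 mx; [lia | lia |].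
  split=> /=; first (apply/andP; split; lia).
  + by rewrite res_pw andbT; apply/allP.
  + move=> e; rewrite inE => /orP [/eqP -> | /res_ev [m [e_m lt_m pos_m]]].
      by exists mid.
    by exists m; split => //; lia.
Qed.

(* [(x0, true)] stands for the positive test f(x0) made by the main loop just
   before calling SearchParetoPoint. *)
Definition search_state_ok (x0 : point) (st : point * seq (point * bool)) :=
  [/\ le_k st.1 x0, all (fun e => le_k e.1 x0) st.2,
      pairwise cone_avoided ((x0, true) :: st.2) &
      forall t, t \in (x0, true) :: st.2 -> t.2 -> le_k st.1 t.1].

Lemma search_coord_ok x0 st i :
  search_state_ok x0 st -> search_state_ok x0 (search_coord f st i).
Proof.
case: st => c ev [le_c all_ev pw_ev below_c].
rewrite /search_coord; set res := bsearch f c i _ 0 _.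
have [//|//|/andP[_ res_le] res_pw res_ev] := @bsearch_spec c i (c i).+1 0 (c i).+1.
have le_new : le_k (upd c i res.1) c by exact: le_k_updl.
split.
- exact: le_k_trans le_new le_c.
- rewrite /= all_cat all_ev; apply/allP => e /res_ev [m [-> lt_m _]].
  exact: le_k_trans (le_k_updl (ltnW lt_m)) le_c.
- change (pairwise cone_avoided (((x0, true) :: ev) ++ res.2)).
  rewrite pairwise_cat pw_ev res_pw !andbT.
  apply/allrelP => t e t_ev e_res; apply/implyP => pos_t; apply/negP => le_te.
  have [m [e_m lt_m _]] := res_ev e e_res.
  move: (not_le_k_upd lt_m) => /negP; apply.
  by rewrite -e_m; exact: le_k_trans (below_c t t_ev pos_t) le_te.
- move=> t; rewrite -cat_cons mem_cat => /orP [t_ev pos_t | t_res pos_t].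
    exact: le_k_trans le_new (below_c t t_ev pos_t).
  have [m [-> lt_m le_m]] := res_ev t t_res.
  by apply: le_k_upd2 (le_m pos_t) _; rewrite (leq_trans (ltnW lt_m)) ?coord_leN.
Qed.

Lemma search_pareto_spec (x : point) :
  let sp := search_pareto f x in
  [/\ all (fun e => le_k e.1 x) sp.2,
      pairwise cone_avoided ((x, true) :: sp.2) &
      forall t, t \in (x, true) :: sp.2 -> t.2 -> le_k sp.1 t.1].
Proof.
have init : search_state_ok x (x, [::]).
  split=> //=; first exact: le_k_refl.
  by move=> t; rewrite inE => /eqP -> _; apply: le_k_refl.
have [] : search_state_ok x (search_pareto f x).
  rewrite /search_pareto; elim: (enum _) (x, [::]) init => //= i s IH st.
  by move/(search_coord_ok i)/IH.
by [].
Qed.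

Lemma mem_S'_of S p z : z \in S'_of S p ->
  ~~ le_k p z /\ exists2 y, y \in S & le_k z y.
Proof.
rewrite inE => /existsP [y /andP [y_S /orP [/andP [nle /eqP ->] |]]].
  by split => //; exists y; rewrite ?le_k_refl.
case/andP => le_py /existsP [c /andP [pos_c /eqP ->]].
have lt_pc : (p c).-1 < p c by rewrite prednK.
have le_pcN : (p c).-1 <= N by rewrite (leq_trans (ltnW lt_pc)) ?coord_leN.
split.
- by apply/negP => /forallP /(_ c); rewrite upd_nat // eqxx leqNgt lt_pc.
- exists y => //; apply: le_k_updl.
  by rewrite (leq_trans (ltnW lt_pc)) //; move/forallP: le_py.
Qed.

Definition cone_invariant (S : {set point}) (tr : seq (point * bool)) :=
  pairwise cone_avoided tr /\
  forall t, t \in tr -> t.2 -> forall z, z \in S -> ~~ le_k t.1 z.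

Lemma reach_cone_invariant S P tr : reach f S P tr -> cone_invariant S tr.
Proof.
elim => [|S0 P0 tr0 x _ [pw0 cone0] x_S _|S0 P0 tr0 x _ [pw0 cone0] x_S _].
- by split => // t; rewrite in_nil.
- have [below_x pw_sp above_p] := search_pareto_spec x.
  set sp := search_pareto f x in below_x pw_sp above_p *.
  split.
  + rewrite pairwise_cat pw0 pw_sp !andbT.
    apply/allrelP => t e t_tr0 e_sp; apply/implyP => pos_t; apply/negP => le_te.
    have le_ex : le_k e.1 x.
      move: e_sp; rewrite inE => /orP [/eqP -> | /(allP below_x)//].
      exact: le_k_refl.
    by move: (cone0 t t_tr0 pos_t x x_S); rewrite (le_k_trans le_te le_ex).
  + move=> t t_tr pos_t z.
    rewrite inE => /andP [/mem_S'_of [nle_pz [y y_S le_zy]] _].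
    apply/negP => le_tz; move: t_tr; rewrite mem_cat => /orP [t_tr0 | t_sp].
      by move: (cone0 t t_tr0 pos_t y y_S); rewrite (le_k_trans le_tz le_zy).
    by move: nle_pz; rewrite (le_k_trans (above_p t t_sp pos_t) le_tz).
- split.
  + rewrite pairwise_rcons pw0 andbT; apply/allP => t t_tr0.
    by apply/implyP => pos_t; apply: cone0.
  + move=> t; rewrite mem_rcons inE => /orP [/eqP -> // | t_tr0] pos_t z.
    by rewrite in_setD1 => /andP [_]; apply: cone0.
Qed.

End Pareto.

Theorem lemma4 (N k : nat) (k_pos : 0 < k) (f : point N k -> bool)
    (f_feas : feasibility f)
    (S P : {set point N k}) (tr : seq (point N k * bool))
    (Hrun : reach f S P tr)
    (i j : nat) (x y : point N k) (b : bool) :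
  i < j -> j < size tr ->
  nth ([ffun => ord0], false) tr i = (x, true) ->
  nth ([ffun => ord0], false) tr j = (y, b) ->
  ~~ le_k x y.
Proof.
move=> lt_ij lt_j tr_i tr_j.
have [pw_tr _] := reach_cone_invariant Hrun.
have := pairwiseP ([ffun => ord0], false) pw_tr i j.
by rewrite tr_i tr_j /cone_avoided /= => ->; rewrite // -topredE /= (ltn_trans lt_ij).
Qed.
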